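(* Let $R$ be a ring with identity and involution $*$, and let $a\in R$. The following are equivalent: (1) $a$ is core invertible; (2) $a$ is group invertible and there exists $x\in R$ such that $(ax)^*=ax$ and $xa^2=a$; (3) $a$ is group invertible and there exists $x\in R$ such that $(ax)^*=ax$ and $xa=a^{\#}a$.
   Context: An involution on $R$ satisfies $(a^* )^*=a$, $(ab)^*=b^*a^*$, $(a+b)^*=a^*+b^*$. An element $x\in R$ is a core inverse of $a$ if $axa=a$, $xR=aR$ and $Rx=Ra^*$; $a$ is core invertible if such $x$ exists. The group inverse $a^{\#}$ of $a$ is the (unique) $b$ with $aba=a$, $bab=b$, $ab=ba$; $a$ is group invertible if it exists. *)

From mathcomp Require Import all_boot all_algebra.
Set Implicit Arguments. Unset Strict Implicit. Unset Printing Implicit Defensive.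
Import GRing.Theory.
Local Open Scope ring_scope.

Definition is_involution (R : pzRingType) (star : R -> R) : Prop :=
  [/\ forall a, star (star a) = a,
      forall a b, star (a * b) = star b * star a &
      forall a b, star (a + b) = star a + star b].

Definition right_ideal_eq (R : pzRingType) (x y : R) : Prop :=
  (exists r, x = y * r) /\ (exists s, y = x * s).
Definition left_ideal_eq (R : pzRingType) (x y : R) : Prop :=
  (exists r, x = r * y) /\ (exists s, y = s * x).

Definition is_core_inverse (R : pzRingType) (star : R -> R) (a x : R) : Prop :=
  [/\ a * x * a = a, right_ideal_eq x a & left_ideal_eq x (star a)].

Definition core_invertible (R : pzRingType) (star : R -> R) (a : R) : Prop :=
  exists x, is_core_inverse star a x.

Definition is_group_inverse (R : pzRingType) (a b : R) : Prop :=
  [/\ a * b * a = a, b * a * b = b & a * b = b * a].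

Definition group_invertible (R : pzRingType) (a : R) : Prop :=
  exists b, is_group_inverse a b.

From mathcomp Require Import all_boot all_algebra.
Local Open Scope ring_scope.
Import GRing.Theory.

Set Implicit Arguments.
Unset Strict Implicit.

(* If x is a core inverse of a, then x = x (ax)^* because x lies in Ra^*;
   hence ax is hermitian, x a x = x and x a^2 = a, and x^2 a is the group
   inverse of a.  Conversely, if a has a group inverse a# and ax is
   hermitian with x a = a# a, then a# a x is a core inverse: it lies in
   a a#R = aR, and Rx = Ra^* because a^* = a^* (ax). *)

Lemma group_inverse_mulr_sqr (R : pzRingType) (a b x : R) :
  is_group_inverse a b -> x * a ^+ 2 = a -> x * a = b * a.
Proof.
case=> aba _ ab_ba xa2.
have aab : a * a * b = a by rewrite -mulrA ab_ba mulrA aba.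
by rewrite -{1}aab !mulrA -(mulrA x a a) -expr2 xa2 ab_ba.
Qed.

Section CoreInverse.

Variables (R : pzRingType) (star : R -> R).
Hypothesis inv : is_involution star.

Section OfCoreInverse.

Variables (a x : R).
Hypothesis ci : is_core_inverse star a x.

Lemma core_inverse_mul_star : x * star (a * x) = x.
Proof.
case: inv ci => _ sM _ [axa _ [[r' xr'] _]].
rewrite [RHS]xr' -[in RHS]axa !sM.
by rewrite [in RHS]mulrA -xr'.
Qed.

Lemma core_inverse_hermitian : star (a * x) = a * x.
Proof.
case: inv => sK sM _.
have ax_mul_star : a * x = a * x * star (a * x).
  by rewrite -mulrA core_inverse_mul_star.
by rewrite ax_mul_star sM sK.
Qed.

Lemma core_inverse_reflexive : x * a * x = x.
Proof. by rewrite -mulrA -core_inverse_hermitian core_inverse_mul_star. Qed.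

Lemma core_inverse_mulr_sqr : x * a ^+ 2 = a.
Proof.
case: ci => _ [_ [s as_]] _.
by rewrite expr2 mulrA {2}as_ mulrA core_inverse_reflexive -as_.
Qed.

Lemma core_inverse_group_inverse : is_group_inverse a (x * x * a).
Proof.
case: ci => axa [[r xr] _] _.
have axx : a * x * x = x by rewrite {2}xr mulrA axa -xr.
have xaa : x * a * a = a by rewrite -mulrA -expr2 core_inverse_mulr_sqr.
have ab : a * (x * x * a) = x * a by rewrite !mulrA axx.
have ba : x * x * a * a = x * a by rewrite -[x * x * a]mulrA -mulrA xaa.
split.
- by rewrite ab xaa.
- by rewrite ba !mulrA core_inverse_reflexive.
- by rewrite ab ba.
Qed.

End OfCoreInverse.

Lemma core_inverse_of_group_inverse (a b x : R) :
  is_group_inverse a b -> star (a * x) = a * x -> x * a = b * a ->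
  is_core_inverse star a (b * a * x).
Proof.
case: inv => _ sM _ gi herm xa; case: (gi) => aba bab ab_ba.
have axa : a * x * a = a by rewrite -mulrA xa mulrA aba.
have star_a : star a = star a * (a * x) by rewrite -herm -sM axa.
have abb : a * b * b = b by rewrite ab_ba bab.
split.
- by rewrite !mulrA aba axa.
- split; first by exists (b * b * a * x); rewrite -{1}abb !mulrA.
  exists (a * a).
  by rewrite !mulrA -(mulrA (b * a) x a) xa mulrA bab -ab_ba aba.
- split; first by exists (b * star x); rewrite -[RHS]mulrA -sM herm mulrA.
  exists (star a * a).
  by rewrite {1}star_a !mulrA -(mulrA (star a) a b) -(mulrA _ (a * b) a) aba.
Qed.

End CoreInverse.

Theorem corollary2p7 (R : pzRingType) (star : R -> R) (a : R) :
  is_involution star ->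
  (core_invertible star a <->
     (group_invertible a /\
      exists x, star (a * x) = a * x /\ x * (a ^+ 2) = a)) /\
  (core_invertible star a <->
     (exists ag, is_group_inverse a ag /\
      exists x, star (a * x) = a * x /\ x * a = ag * a)).
Proof.
move=> inv; split; split.
- move=> [x ci]; split.
    by exists (x * x * a); exact (core_inverse_group_inverse inv ci).
  by exists x; rewrite (core_inverse_hermitian inv ci) (core_inverse_mulr_sqr inv ci).
- move=> [[b gi] [x [herm xa2]]]; exists (b * a * x).
  exact (core_inverse_of_group_inverse inv gi herm (group_inverse_mulr_sqr gi xa2)).
- move=> [x ci]; have gi := core_inverse_group_inverse inv ci.
  exists (x * x * a); split => //; exists x.
  rewrite (core_inverse_hermitian inv ci); split => //.
  exact (group_inverse_mulr_sqr gi (core_inverse_mulr_sqr inv ci)).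
- move=> [b [gi [x [herm xa]]]]; exists (b * a * x).
  exact (core_inverse_of_group_inverse inv gi herm xa).
Qed.
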